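(* Let $\mathbb{K}$ be a field, $m=4$, and for $p\in\mathbf{Z}^2$ let $\langle p\rangle=\{q\in\mathbf{Z}^2:p\le q\le(10,10)\}$. Let $\mathcal W=\bigcup_{k=0}^{4}\langle(8-2k,2k)\rangle$, $x_1=(7,1)$, $x_2=(5,3)$, $x_3=(3,5)$, $x_4=(1,7)$. Define $\mathcal I_1=\mathcal W\cup\langle x_1\rangle\cup\langle x_2\rangle\cup\langle x_3\rangle\cup\langle x_4\rangle$, $\mathcal I_2=\mathcal W\cup\langle x_1-(1,1)\rangle\cup\langle x_2\rangle\cup\langle x_4\rangle$, $\mathcal I_3=\mathcal W\cup\langle x_1\rangle\cup\langle x_2-(1,1)\rangle\cup\langle x_3\rangle$, $\mathcal J_1=\mathcal W\cup\langle x_1\rangle\cup\langle x_2\rangle\cup\langle x_3\rangle\cup\langle x_4\rangle$, $\mathcal J_2=\mathcal W\cup\langle x_1\rangle\cup\langle x_3-(1,1)\rangle\cup\langle x_4\rangle$, $\mathcal J_3=\mathcal W\cup\langle x_2\rangle\cup\langle x_3\rangle\cup\langle x_4-(1,1)\rangle$, and $M=\bigoplus_{i=1}^3I^{\mathcal I_i}$, $N=\bigoplus_{j=1}^3I^{\mathcal J_j}$ as functors $\mathbf{Z}^2\to\mathbf{Vec}_{\mathbb{K}}$. Then $d_I(M,N)=1$ and $d_B(\mathcal B(M),\mathcal B(N))=2$, where $\mathcal B(M)=\{\mathcal I_1,\mathcal I_2,\mathcal I_3\}$ and $\mathcal B(N)=\{\mathcal J_1,\mathcal J_2,\mathcal 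J_3\}$.
   Context: $\mathbf{Z}^2$ has the product order. $I^{\mathcal J}$ is the interval module ($\mathbb{K}$ on $\mathcal J$, $0$ elsewhere, identity maps between points of $\mathcal J$, zero otherwise). For $\delta\in\{0,1,\dots\}$: $M(\delta)_a=M_{a+(\delta,\delta)}$, $f(\delta)_a=f_{a+(\delta,\delta)}$; $\phi^{2\delta}_M:M\to M(2\delta)$ is given by internal maps; a $\delta$-interleaving is $f:M\to N(\delta)$, $g:N\to M(\delta)$ with $g(\delta)\circ f=\phi^{2\delta}_M$ and $f(\delta)\circ g=\phi^{2\delta}_N$; $d_I(M,N)$ is the least such $\delta$. Intervals are $\delta$-interleaved if their interval modules are; $\mathcal J$ is $2\delta$-trivial if $I^{\mathcal J}$ is $\delta$-interleaved with $0$; $\mathcal C_{2\delta}$ is the multiset of intervals in $\mathcal C$ that are not $2\delta$-trivial. A $\delta$-matching between barcodes $\mathcal C,\mathcal D$ is a partial bijection $\sigma$ whose domain contains $\mathcal C_{2\delta}$, image contains $\mathcal D_{2\delta}$, and with $\sigma(\mathcal J)=\mathcal K$ implying $\mathcal J,\mathcal K$ are $\delta$-interleaved; $d_B(\mathcal C,\mathcal D)$ is the least $\delta\in\{0,1,\dots\}$ admitting a $\delta$-matching. *)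

(* Persistence modules over Z^2, pointwise finite-dimensional,
   encoded by dimensions and matrices (row-vector convention: a matrix
   A : 'M_(m,n) is the linear map K^m -> K^n, v |-> v *m A, so composition
   "f then g" is f *m g). *)
From HB Require Import structures.
From mathcomp Require Import all_boot all_order all_algebra.
Set Implicit Arguments. Unset Strict Implicit. Unset Printing Implicit Defensive.
Import Order.TTheory GRing.Theory Num.Theory.
Local Open Scope ring_scope.

Definition point := (int * int)%type.
Definition ple (a b : point) : bool := (a.1 <= b.1) && (a.2 <= b.2).
Definition shift (d : nat) (a : point) : point := (a.1 + d%:Z, a.2 + d%:Z).

(* A Z^2-indexed family of finite-dim K-spaces with structure maps M_{a->b}
   (only meaningful for a <= b). *)
Record pmod (K : fieldType) := PMod {
  pdim : point -> nat;
  pmap : forall a b : point, 'M[K]_(pdim a, pdim b) }.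
Arguments PMod {K}.

Definition is_pmod (K : fieldType) (M : pmod K) : Prop :=
  (forall a, pmap M a a = 1%:M) /\
  (forall a b c, ple a b -> ple b c -> pmap M a b *m pmap M b c = pmap M a c).

Definition zmod0 (K : fieldType) : pmod K := PMod (fun _ => 0%N) (fun a b => 0).

Definition imod (K : fieldType) (J : pred point) : pmod K :=
  PMod (fun a => nat_of_bool (J a))
       (fun a b => const_mx (if J a && J b then 1 else 0)).

Definition dsum (K : fieldType) (M N : pmod K) : pmod K :=
  PMod (fun a => (pdim M a + pdim N a)%N)
       (fun a b => block_mx (pmap M a b) 0 0 (pmap N a b)).

Definition shifted_hom (K : fieldType) (M N : pmod K) (d : nat)
  (f : forall a, 'M[K]_(pdim M a, pdim N (shift d a))) : Prop :=
  forall a b, ple a b -> pmap M a b *m f b = f a *m pmap N (shift d a) (shift d b).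

Definition interleaving (K : fieldType) (M N : pmod K) (d : nat)
  (f : forall a, 'M[K]_(pdim M a, pdim N (shift d a)))
  (g : forall a, 'M[K]_(pdim N a, pdim M (shift d a))) : Prop :=
  [/\ shifted_hom f, shifted_hom g,
      (forall a, f a *m g (shift d a) = pmap M a (shift d (shift d a))) &
      (forall a, g a *m f (shift d a) = pmap N a (shift d (shift d a)))].

Definition interleaved (K : fieldType) (M N : pmod K) (d : nat) : Prop :=
  exists f g, @interleaving K M N d f g.

Definition is_least (P : nat -> Prop) (n : nat) : Prop :=
  P n /\ forall m, (m < n)%N -> ~ P m.

Definition interleaving_dist_is (K : fieldType) (M N : pmod K) (n : nat) : Prop :=
  is_least (interleaved M N) n.

(* J is 2d-trivial : I^J is d-interleaved with 0 *)
Definition trivial2 (K : fieldType) (d : nat) (J : pred point) : Prop :=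
  interleaved (imod K J) (zmod0 K) d.

(* barcodes: finite multisets of intervals, as lists *)
Definition barcode := seq (pred point).
Definition bnth (C : barcode) (i : nat) : pred point := nth (fun _ => false) C i.

Definition matching (K : fieldType) (C D : barcode) (d : nat) : Prop :=
  exists sigma : 'I_(size C) -> option 'I_(size D),
    [/\ (forall (i i' : 'I_(size C)) j, sigma i = Some j -> sigma i' = Some j -> i = i'),
        (forall i : 'I_(size C), ~ trivial2 K d (bnth C i) -> sigma i <> None),
        (forall j : 'I_(size D), ~ trivial2 K d (bnth D j) -> exists i, sigma i = Some j) &
        (forall (i : 'I_(size C)) (j : 'I_(size D)), sigma i = Some j ->
           interleaved (imod K (bnth C i)) (imod K (bnth D j)) d)].

Definition bottleneck_dist_is (K : fieldType) (C D : barcode) (n : nat) : Prop :=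
  is_least (matching K C D) n.

Definition top : point := (10, 10).
Definition upb (p : point) : pred point := fun q => ple p q && ple q top.
Definition sub11 (p : point) : point := (p.1 - 1, p.2 - 1).

Definition W : pred point :=
  fun q => has (fun k : nat => upb (8 - 2 * k%:Z, 2 * k%:Z) q) (iota 0 5).
Definition x1 : point := (7, 1).
Definition x2 : point := (5, 3).
Definition x3 : point := (3, 5).
Definition x4 : point := (1, 7).

Definition I1 : pred point := fun q => [|| W q, upb x1 q, upb x2 q, upb x3 q | upb x4 q].
Definition I2 : pred point := fun q => [|| W q, upb (sub11 x1) q, upb x2 q | upb x4 q].
Definition I3 : pred point := fun q => [|| W q, upb x1 q, upb (sub11 x2) q | upb x3 q].
Definition J1 : pred point := fun q => [|| W q, upb x1 q, upb x2 q, upb x3 q | upb x4 q].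
Definition J2 : pred point := fun q => [|| W q, upb x1 q, upb (sub11 x3) q | upb x4 q].
Definition J3 : pred point := fun q => [|| W q, upb x2 q, upb x3 q | upb (sub11 x4) q].

Definition Mmod (K : fieldType) : pmod K := dsum (imod K I1) (dsum (imod K I2) (imod K I3)).
Definition Nmod (K : fieldType) : pmod K := dsum (imod K J1) (dsum (imod K J2) (imod K J3)).
Definition BM : barcode := [:: I1; I2; I3].
Definition BN : barcode := [:: J1; J2; J3].

(* Both M and N are direct sums of three interval modules supported in the
   box [0,10]^2, so a morphism M -> N(d) can be given by an integer matrix of
   scalars between the summands; naturality and the interleaving identities
   then become finitely many integer identities, checked by computation.
   Explicit matrices give a 1-interleaving, and d_I(M,N) > 0 because I2
   contains (6,0) where N vanishes.  Matching I_i with J_i is a 2-matching.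
   No d-matching exists for d <= 1: I2 and I3 contain (8,0) and (10,2), hence
   are not 2d-trivial, and by the same vanishing argument each of them can
   only be 1-interleaved with J1, contradicting injectivity. *)
From Pilot Require Import Defs.
From HB Require Import structures.
From mathcomp Require Import all_boot all_order all_algebra.
From mathcomp Require Import zify.
Set Implicit Arguments. Unset Strict Implicit. Unset Printing Implicit Defensive.
Import Order.TTheory GRing.Theory Num.Theory.
Local Open Scope ring_scope.

Lemma interleaved_sym (K : fieldType) (M N : pmod K) d :
  interleaved M N d -> interleaved N M d.
Proof. by case=> f [g [fh gh fg gf]]; exists g, f. Qed.

Lemma interleaved_pmap_eq0 (K : fieldType) (M N : pmod K) d a :
  interleaved M N d -> pdim N (shift d a) = 0%N ->
  Defs.pmap M a (shift d (shift d a)) = 0.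
Proof.
case=> f [g [_ _ fg _]] N0; rewrite -fg.
by move: (f a) (g (shift d a)); rewrite N0 => A B; rewrite thinmx0 mul0mx.
Qed.

Definition supp (U : pred point) (Us : seq (pred point)) (a : point) : seq bool :=
  [seq V a | V <- U :: Us].

Definition idc (i j : nat) : int := (i == j)%:R.

(* [s] is the support at the intermediate point: a summand vanishing there
   contributes nothing to a product. *)
Fixpoint dotc (s : seq bool) (c d : nat -> int) : int :=
  if s is x :: s' then c 0%N * d 0%N *+ x + dotc s' (fun k => c k.+1) (fun k => d k.+1)
  else 0.

Definition mulc (s : seq bool) (C D : nat -> nat -> int) (i j : nat) : int :=
  dotc s (C i) (D^~ j).

Lemma dotc0l s d : dotc s (fun=> 0) d = 0.
Proof. by elim: s d => [|x s IH] d //=; rewrite IH mul0r mul0rn addr0. Qed.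

Lemma dotc0r s c : dotc s c (fun=> 0) = 0.
Proof. by elim: s c => [|x s IH] c //=; rewrite IH mulr0 mul0rn addr0. Qed.

Lemma dotc_idl s i d : dotc s (idc i) d = d i *+ nth false s i.
Proof.
elim: s i d => [|x s IH] [|i] d /=; rewrite ?nth_nil ?mulr0n //.
- by rewrite mul1r (dotc0l s (fun k => d k.+1)) addr0.
- by rewrite mul0r mul0rn add0r (IH i (fun k => d k.+1)).
Qed.

Lemma dotc_idr s c j : dotc s c (idc^~ j) = c j *+ nth false s j.
Proof.
elim: s c j => [|x s IH] c [|j] /=; rewrite ?nth_nil ?mulr0n //.
- by rewrite mulr1 (dotc0r s (fun k => c k.+1)) addr0.
- by rewrite mulr0 mul0rn add0r (IH (fun k => c k.+1) j).
Qed.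

Definition eq_on (s t : seq bool) (C C' : nat -> nat -> int) : bool :=
  all (fun i => all (fun j => nth false s i && nth false t j ==> (C i j == C' i j))
                    (iota 0 (size t)))
      (iota 0 (size s)).

Lemma eq_onP s t C C' i j :
  eq_on s t C C' -> nth false s i -> nth false t j -> C i j = C' i j.
Proof.
have lt_size (u : seq bool) k : nth false u k -> (k < size u)%N.
  by rewrite ltnNge; apply: contraTN => /(nth_default false) ->.
move=> /allP/(_ i) st si tj; move: st; rewrite mem_iota add0n lt_size //.
by move=> /(_ isT)/allP/(_ j); rewrite mem_iota add0n lt_size // si tj => /(_ isT)/eqP.
Qed.

Lemma eq_on_vacuousl s t C C' : ~~ has id s -> eq_on s t C C'.
Proof.
move=> hs; apply/allP => i; rewrite mem_iota => /andP[_ lti]; apply/allP => j _.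
suff -> : nth false s i = false by [].
by apply/negbTE; apply: contra hs => si; apply/hasP; exists (nth false s i); rewrite ?mem_nth.
Qed.

Lemma eq_on_vacuousr s t C C' : ~~ has id t -> eq_on s t C C'.
Proof.
move=> ht; apply/allP => i _; apply/allP => j; rewrite mem_iota => /andP[_ ltj].
suff -> : nth false t j = false by rewrite andbF.
by apply/negbTE; apply: contra ht => tj; apply/hasP; exists (nth false t j); rewrite ?mem_nth.
Qed.

Section IntervalSums.
Variable K : fieldType.

Fixpoint isum (U : pred point) (Us : seq (pred point)) : pmod K :=
  if Us is V :: Vs then dsum (imod K U) (isum V Vs) else imod K U.

Lemma pdim_isum U Us a : pdim (isum U Us) a = count (fun V => V a) (U :: Us).
Proof. by elim: Us U => [|V Vs IH] U /=; rewrite ?addn0 // IH. Qed.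

Lemma isum_pmap_eq0 U Us a b :
  Defs.pmap (isum U Us) a b = 0 -> ~~ has (fun V => V a && V b) (U :: Us).
Proof.
have imod_eq0 V : Defs.pmap (imod K V) a b = 0 -> ~~ (V a && V b).
  rewrite /=; case: (V a) (V b) => -[] //= /matrixP/(_ ord0 ord0).
  by rewrite !mxE => /eqP; rewrite oner_eq0.
elim: Us U => [|V Vs IH] U /=; first by rewrite orbF => /imod_eq0.
rewrite -block_mx0 => /eq_block_mx[/imod_eq0 hU _ _ /IH hVs].
by rewrite negb_or hU.
Qed.

Lemma isum_not_interleaved U Us V Vs d a :
  has (fun W => W a && W (shift d (shift d a))) (U :: Us) ->
  ~~ has (fun W => W (shift d a)) (V :: Vs) ->
  ~ interleaved (isum U Us) (isum V Vs) d.
Proof.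
move=> hU hV /(interleaved_pmap_eq0 (a := a)); rewrite pdim_isum.
have -> : count (fun W => W (shift d a)) (V :: Vs) = 0%N.
  by apply/eqP; rewrite eqn0Ngt -has_count.
by move=> /(_ erefl)/isum_pmap_eq0; rewrite hU.
Qed.

Lemma const_mx_eq m n (x y : K) :
  ((0 < m)%N -> (0 < n)%N -> x = y) -> (const_mx x : 'M_(m, n)) = const_mx y.
Proof.
have ord_gt0 k (l : 'I_k) : (0 < k)%N by case: k l => [[]|].
by move=> xy; apply/matrixP => i j; rewrite !mxE xy ?(ord_gt0 _ i) ?(ord_gt0 _ j).
Qed.

Lemma mul_const_mx m n p (x y : int) :
  (const_mx x%:~R : 'M[K]_(m, n)) *m (const_mx y%:~R : 'M_(n, p))
  = const_mx (x * y *+ n)%:~R.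
Proof.
have intrMn (z : int) : (z *+ n)%:~R = z%:~R *+ n :> K by exact: raddfMn.
apply/matrixP => i j; rewrite !mxE intrMn intrM.
rewrite (eq_bigr (fun _ => x%:~R * y%:~R)) ?sumr_const ?card_ord // => k _.
by rewrite !mxE.
Qed.

(* The block matrix with scalar [C i j] from the i-th summand at [a] to the
   j-th summand at [b]; blocks of vanishing summands are empty. *)
Fixpoint coef_row m V Vs (c : nat -> int) (b : point) {struct Vs}
    : 'M[K]_(m, pdim (isum V Vs) b) :=
  match Vs return 'M_(m, pdim (isum V Vs) b) with
  | [::] => const_mx (c 0%N)%:~R
  | V' :: Vs' => row_mx (const_mx (c 0%N)%:~R) (coef_row m V' Vs' (fun j => c j.+1) b)
  end.

Fixpoint coef_mx U Us V Vs (C : nat -> nat -> int) (a b : point) {struct Us}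
    : 'M[K]_(pdim (isum U Us) a, pdim (isum V Vs) b) :=
  match Us return 'M_(pdim (isum U Us) a, pdim (isum V Vs) b) with
  | [::] => coef_row (U a) V Vs (C 0%N) b
  | U' :: Us' => col_mx (coef_row (U a) V Vs (C 0%N) b)
                        (coef_mx U' Us' V Vs (fun i => C i.+1) a b)
  end.

Lemma eq_coef_row m V Vs c c' b :
  ((0 < m)%N -> forall j, nth false (supp V Vs b) j -> c j = c' j) ->
  coef_row m V Vs c b = coef_row m V Vs c' b.
Proof.
elim: Vs V c c' => [|V' Vs IH] V c c' e /=.
  by apply: const_mx_eq => m_gt0; rewrite lt0b => hV; rewrite (e m_gt0 0%N).
congr row_mx.
  by apply: const_mx_eq => m_gt0; rewrite lt0b => hV; rewrite (e m_gt0 0%N).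
by apply: IH => m_gt0 j; apply: (e m_gt0 j.+1).
Qed.

Lemma eq_coef_mx U Us V Vs C C' a b :
  (forall i j, nth false (supp U Us a) i -> nth false (supp V Vs b) j -> C i j = C' i j) ->
  coef_mx U Us V Vs C a b = coef_mx U Us V Vs C' a b.
Proof.
elim: Us U C C' => [|U' Us IH] U C C' e /=.
  by apply: eq_coef_row; rewrite lt0b => hU j; apply: (e 0%N j).
congr col_mx; first by apply: eq_coef_row; rewrite lt0b => hU j; apply: (e 0%N j).
by apply: IH => i; apply: (e i.+1).
Qed.

Lemma coef_row0 m V Vs b : coef_row m V Vs (fun=> 0) b = 0.
Proof.
elim: Vs V => [|V' Vs IH] V /=; first by apply/matrixP => i j; rewrite !mxE.
by rewrite IH -row_mx0; congr row_mx; apply/matrixP => i j; rewrite !mxE.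
Qed.

Lemma coef_mx0 U Us V Vs a b : coef_mx U Us V Vs (fun _ _ => 0) a b = 0.
Proof. by elim: Us U => [|U' Us IH] U /=; rewrite coef_row0 // IH col_mx0. Qed.

Lemma add_coef_row m V Vs c c' b :
  coef_row m V Vs c b + coef_row m V Vs c' b = coef_row m V Vs (fun j => c j + c' j) b.
Proof.
have add_const (x y : int) n :
    const_mx x%:~R + const_mx y%:~R = const_mx (x + y)%:~R :> 'M[K]_(m, n).
  by apply/matrixP => i j; rewrite !mxE intrD.
by elim: Vs V c c' => [|V' Vs IH] V c c' /=; rewrite ?add_row_mx ?IH add_const.
Qed.

Lemma mul_const_coef_row m n V Vs (x : int) c b :
  (const_mx x%:~R : 'M[K]_(m, n)) *m coef_row n V Vs c b
  = coef_row m V Vs (fun j => x * c j *+ n) b.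
Proof.
by elim: Vs V c => [|V' Vs IH] V c /=; rewrite ?mul_mx_row ?IH mul_const_mx.
Qed.

Lemma coef_mx_cons_col U Us V V' Vs C a b :
  coef_mx U Us V (V' :: Vs) C a b =
  row_mx (coef_mx U Us V [::] C a b) (coef_mx U Us V' Vs (fun i j => C i j.+1) a b).
Proof. by elim: Us U C => [|U' Us IH] U C //=; rewrite IH -block_mxEv block_mxEh. Qed.

Lemma pmap_isum U Us a b : Defs.pmap (isum U Us) a b = coef_mx U Us U Us idc a b.
Proof.
have pmap_imod V : Defs.pmap (imod K V) a b = coef_row (V a) V [::] (idc 0) b.
  by apply: const_mx_eq; rewrite !lt0b => -> ->.
elim: Us U => [|U' Us IH] U; first exact: pmap_imod.
rewrite [coef_mx _ _ _ _ _ _ _]/= coef_mx_cons_col /= -block_mxEv IH.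
congr block_mx.
- exact: pmap_imod.
- by rewrite -(coef_row0 _ U' Us b); apply: eq_coef_row.
- rewrite -(coef_mx0 U' Us U [::] a b).
  by apply: (@eq_coef_mx U' Us U [::]) => i [|j] //=; rewrite nth_nil.
Qed.

Lemma mul_coef_row m V Vs W Ws c D b e :
  coef_row m V Vs c b *m coef_mx V Vs W Ws D b e
  = coef_row m W Ws (fun j => dotc (supp V Vs b) c (D^~ j)) e.
Proof.
elim: Vs V c D => [|V' Vs IH] V c D /=.
  by rewrite mul_const_coef_row; apply: (@eq_coef_row m W Ws) => _ j _; rewrite addr0.
by rewrite mul_row_col mul_const_coef_row IH add_coef_row.
Qed.

Lemma mul_coef_mx U Us V Vs W Ws C D a b e :
  coef_mx U Us V Vs C a b *m coef_mx V Vs W Ws D b e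
  = coef_mx U Us W Ws (mulc (supp V Vs b) C D) a e.
Proof. by elim: Us U C => [|U' Us IH] U C /=; rewrite ?mul_col_mx ?IH mul_coef_row. Qed.

Section Interleaving.
Variables (U : pred point) (Us : seq (pred point)) (V : pred point) (Vs : seq (pred point)).
Variable d : nat.

(* [if] rather than [==>], so that [vm_compute] skips incomparable pairs. *)
Definition naturality_check (C : nat -> nat -> int) (a b : point) : bool :=
  if ple a b then
    let sb := supp U Us b in let ta := supp V Vs (shift d a) in
    eq_on (supp U Us a) (supp V Vs (shift d b))
      (fun i j => C i j *+ nth false sb i) (fun i j => C i j *+ nth false ta j)
  else true.

Definition composition_check (C D : nat -> nat -> int) (a : point) : bool :=
  eq_on (supp U Us a) (supp U Us (shift d (shift d a)))
    (mulc (supp V Vs (shift d a)) C D) idc.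

Lemma coef_mx_shifted_hom C : (forall a b, naturality_check C a b) ->
  shifted_hom (fun a => coef_mx U Us V Vs C a (shift d a)).
Proof.
move=> hC a b ab; rewrite !pmap_isum !mul_coef_mx; apply: eq_coef_mx => i j si tj.
rewrite /mulc dotc_idl dotc_idr.
by move: (hC a b); rewrite /naturality_check ab => /eq_onP; exact.
Qed.

Lemma coef_mx_comp C D a : composition_check C D a ->
  coef_mx U Us V Vs C a (shift d a) *m coef_mx V Vs U Us D (shift d a) (shift d (shift d a))
  = Defs.pmap (isum U Us) a (shift d (shift d a)).
Proof.
by move=> hCD; rewrite pmap_isum mul_coef_mx; apply: eq_coef_mx => i j; exact: eq_onP.
Qed.

End Interleaving.

Lemma isum_interleaved U Us V Vs d C D :
  (forall a b, naturality_check U Us V Vs d C a b) ->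
  (forall a b, naturality_check V Vs U Us d D a b) ->
  (forall a, composition_check U Us V Vs d C D a) ->
  (forall a, composition_check V Vs U Us d D C a) ->
  interleaved (isum U Us) (isum V Vs) d.
Proof.
move=> hC hD hCD hDC; exists (fun a => coef_mx U Us V Vs C a (shift d a)),
  (fun a => coef_mx V Vs U Us D a (shift d a)).
by split; [exact: coef_mx_shifted_hom | exact: coef_mx_shifted_hom
          | move=> a; exact: coef_mx_comp | move=> a; exact: coef_mx_comp].
Qed.

End IntervalSums.

Definition box : pred point := upb (0, 0).

Definition box_pts : seq point := [seq (i%:Z, j%:Z) | i <- iota 0 11, j <- iota 0 11].

Lemma box_ptsP a : box a -> a \in box_pts.
Proof.
case: a => -[x|x] [y|y]; rewrite /box /upb /ple /top //= => xy_le10.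
by apply: allpairs_f; rewrite mem_iota; lia.
Qed.

Definition unshift (d : nat) (a : point) : point := (a.1 - d%:Z, a.2 - d%:Z).

Lemma shiftK d : cancel (shift d) (unshift d).
Proof. by case=> x y; rewrite /shift /unshift /= !addrK. Qed.

Lemma forall_box (P : point -> bool) :
  (forall a, ~~ box a -> P a) -> all P box_pts -> forall a, P a.
Proof. by move=> Pout /allP Pbox a; case: (boolP (box a)) => [/box_ptsP/Pbox|/Pout]. Qed.

Lemma forall_box2 (P : point -> point -> bool) d :
  (forall a b, ~~ box a || ~~ box (shift d b) -> P a b) ->
  all (fun a => all (fun b => P a (unshift d b)) box_pts) box_pts -> forall a b, P a b.
Proof.
move=> Pout Pbox a b; case: (boolP (box a)) => [ba|na]; last by rewrite Pout ?na.
case: (boolP (box (shift d b))) => [bb|nb]; last by rewrite Pout ?nb ?orbT.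
rewrite -[b](shiftK d); move/allP: Pbox => /(_ a (box_ptsP ba))/allP; apply.
exact: box_ptsP.
Qed.

Definition boxed (U : pred point) (Us : seq (pred point)) : Prop :=
  forall a, has (fun W => W a) (U :: Us) -> box a.

Lemma supp_out_box U Us a : boxed U Us -> ~~ box a -> ~~ has id (supp U Us a).
Proof. by move=> bU; apply: contra; rewrite has_map; exact: bU. Qed.

Definition interleaving_check U Us V Vs d (C D : nat -> nat -> int) : bool :=
  [&& all (fun a => all (fun b => naturality_check U Us V Vs d C a (unshift d b)) box_pts)
          box_pts,
      all (fun a => all (fun b => naturality_check V Vs U Us d D a (unshift d b)) box_pts)
          box_pts,
      all (composition_check U Us V Vs d C D) box_pts &
      all (composition_check V Vs U Us d D C) box_pts].

Lemma box_interleaved (K : fieldType) U Us V Vs d C D :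
  boxed U Us -> boxed V Vs -> interleaving_check U Us V Vs d C D ->
  interleaved (isum K U Us) (isum K V Vs) d.
Proof.
have natural_out U' Us' V' Vs' C' : boxed U' Us' -> boxed V' Vs' -> forall a b,
    ~~ box a || ~~ box (shift d b) -> naturality_check U' Us' V' Vs' d C' a b.
  move=> bU bV a b /orP[/(supp_out_box bU)|/(supp_out_box bV)] out;
  by rewrite /naturality_check ?(eq_on_vacuousl _ _ _ out) ?(eq_on_vacuousr _ _ _ out) if_same.
have composition_out U' Us' V' Vs' C' D' : boxed U' Us' -> forall a,
    ~~ box a -> composition_check U' Us' V' Vs' d C' D' a.
  by move=> bU a /(supp_out_box bU) out; rewrite /composition_check eq_on_vacuousl.
move=> bU bV /and4P[hC hD hCD hDC]; apply: isum_interleaved.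
- exact: forall_box2 (natural_out _ _ _ _ _ bU bV) hC.
- exact: forall_box2 (natural_out _ _ _ _ _ bV bU) hD.
- exact: forall_box (composition_out _ _ _ _ _ _ bU) hCD.
- exact: forall_box (composition_out _ _ _ _ _ _ bV) hDC.
Qed.

Definition obstructed U Us V Vs d : bool :=
  has (fun a => has (fun W => W a && W (shift d (shift d a))) (U :: Us)
                && ~~ has (fun W => W (shift d a)) (V :: Vs)) box_pts.

Lemma obstructed_not_interleaved (K : fieldType) U Us V Vs d :
  obstructed U Us V Vs d || obstructed V Vs U Us d ->
  ~ interleaved (isum K U Us) (isum K V Vs) d.
Proof.
case/orP => /hasP[a _ /andP[hU hV]]; last move=> /interleaved_sym;
exact: isum_not_interleaved hU hV.
Qed.

Lemma interval_nontrivial (K : fieldType) d (J : pred point) a :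
  J a -> J (shift d (shift d a)) -> ~ trivial2 K d J.
Proof.
move=> Ja Jb /(interleaved_pmap_eq0 (a := a))/(_ erefl).
by move=> /(isum_pmap_eq0 (Us := [::])); rewrite /= Ja Jb.
Qed.

Lemma upb_box p q : upb p q -> ple (0, 0) p -> box q.
Proof. by case: p q => [x y] [u v]; rewrite /box /upb /ple /=; lia. Qed.

Ltac solve_boxed :=
  move=> ? /=; repeat case/orP; try by []; by move/upb_box; apply.

Definition coefs (rows : seq (seq int)) (i j : nat) : int := nth 0 (nth [::] rows i) j.

Lemma Mmod_Nmod_interleaved1 (K : fieldType) : interleaved (Mmod K) (Nmod K) 1.
Proof.
apply: (@box_interleaved K I1 [:: I2; I3] J1 [:: J2; J3] 1
          (coefs [:: [:: 1; 1; 1]; [:: 1; 1; 0]; [:: 1; 0; 1]])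
          (coefs [:: [:: -1; 1; 1]; [:: 1; 0; -1]; [:: 1; -1; 0]])).
- solve_boxed.
- solve_boxed.
- by vm_compute.
Qed.

Lemma Mmod_Nmod_not_interleaved0 (K : fieldType) : ~ interleaved (Mmod K) (Nmod K) 0.
Proof. by apply: (@obstructed_not_interleaved K I1 [:: I2; I3] J1 [:: J2; J3]); vm_compute. Qed.

Lemma BM_BN_matching2 (K : fieldType) : matching K BM BN 2.
Proof.
exists (fun i => Some (i : 'I_(size BN))); split.
- by move=> i i' j [->] [].
- by [].
- by move=> j _; exists j.
- move=> i j [<-]; case: i => -[|[|[|//]]] ? /=;
  apply: (@box_interleaved K _ [::] _ [::] 2 (fun _ _ => 1) (fun _ _ => 1));
  solve [solve_boxed | by vm_compute].
Qed.

Lemma BM_BN_no_matching0 (K : fieldType) : ~ matching K BM BN 0.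
Proof.
case=> sigma [_ matched _ sigma_inter].
pose i2 : 'I_(size BM) := @Ordinal 3 1 isT.
case E: (sigma i2) => [j|]; last first.
  by apply: (matched i2 _ E); apply: (interval_nontrivial (a := (8, 0))).
move: (sigma_inter _ _ E); apply: (@obstructed_not_interleaved K I2 [::] _ [::]).
by case: j {E} => -[|[|[|//]]] ?; vm_compute.
Qed.

Lemma BM_BN_no_matching1 (K : fieldType) : ~ matching K BM BN 1.
Proof.
case=> sigma [sigma_inj matched _ sigma_inter].
have to_J1 (i : 'I_(size BM)) : (0 < i)%N -> exists2 j, sigma i = Some j & val j = 0%N.
  move=> i_gt0; case E: (sigma i) => [j|]; last first.
    exfalso; apply: (matched i _ E); apply: (interval_nontrivial (a := (8, 0)));
    by case: i i_gt0 {E} => -[|[|[|]]].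
  exists j => //; apply/eqP; rewrite -leqn0 leqNgt; apply/negP => j_gt0.
  move: (sigma_inter _ _ E); case: i i_gt0 {E} => -[//|[|[|//]]] ? _;
  case: j j_gt0 => -[//|[|[|//]]] ? _;
  by apply: (@obstructed_not_interleaved K _ [::] _ [::]); vm_compute.
have [j1 s1 j1_0] := to_J1 (@Ordinal 3 1 isT) isT.
have [j2 s2 j2_0] := to_J1 (@Ordinal 3 2 isT) isT.
have j12 : j1 = j2 by apply: val_inj; rewrite j1_0 j2_0.
rewrite -j12 in s2.
by move: (sigma_inj _ _ _ s1 s2) => /(congr1 val).
Qed.

Theorem mainTheorem8 (K : fieldType) :
  interleaving_dist_is (Mmod K) (Nmod K) 1 /\ bottleneck_dist_is K BM BN 2.
Proof.
split; split.
- exact: Mmod_Nmod_interleaved1.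
- by case=> // _; exact: Mmod_Nmod_not_interleaved0.
- exact: BM_BN_matching2.
- by case=> [|[|//]] _; [exact: BM_BN_no_matching0 | exact: BM_BN_no_matching1].
Qed.
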